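(* Let $q$ be a prime power and let $d,\tau,n,m$ be integers with $\lfloor (d-1)/2\rfloor<\tau<d<n\le m$ and $\tau\le n-\tau$. If either $\tau=d/2$ or $m\ge (n-\tau)(2\tau-d+1)+\tau+1$, then there exist a code $\mathcal C\subseteq\mathbb F_{q^m}^n$ with minimum rank distance exactly $d$ and a word $\mathbf r\in\mathbb F_{q^m}^n$ such that $$\max_{\mathbf y\in\mathbb F_{q^m}^n}|\mathcal C\cap\mathcal B_\tau(\mathbf y)|\ \ge\ |\mathcal C\cap\mathcal B_\tau(\mathbf r)|\ \ge\ q^{(n-\tau)(2\tau-d+1)}.$$
   Context: Fixing a basis of $\mathbb F_{q^m}$ over $\mathbb F_q$, each vector in $\mathbb F_{q^m}^n$ is identified with an $m\times n$ matrix over $\mathbb F_q$; $\mathrm{rk}$ denotes its rank. The minimum rank distance of $\mathcal C$ is $\min\{\mathrm{rk}(\mathbf c_1-\mathbf c_2):\mathbf c_1\ne\mathbf c_2\in\mathcal C\}$, and $\mathcal B_\tau(\mathbf r)=\{\mathbf x:\mathrm{rk}(\mathbf x-\mathbf r)\le\tau\}$. Codes need not be linear. *)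

From HB Require Import structures.
From mathcomp Require Import all_boot all_order all_algebra.
Set Implicit Arguments. Unset Strict Implicit. Unset Printing Implicit Defensive.
Import GRing.Theory.
Local Open Scope ring_scope.

(* Vectors of F_{q^m}^n are identified (via a fixed F_q-basis of F_{q^m})
   with m x n matrices over F_q; the rank weight is the matrix rank. *)

Definition rkdist (F : fieldType) (m n : nat) (A B : 'M[F]_(m, n)) : nat :=
  \rank (A - B).

Definition rk_ball (F : finFieldType) (m n : nat) (tau : nat) (r : 'M[F]_(m, n))
  : {set 'M[F]_(m, n)} :=
  [set x : 'M[F]_(m, n) | (rkdist x r <= tau)%N].

Definition min_rank_dist (F : finFieldType) (m n : nat)
  (C : {set 'M[F]_(m, n)}) (d : nat) : Prop :=
  (exists c1, exists c2, [/\ c1 \in C, c2 \in C, c1 != c2 & rkdist c1 c2 = d])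
  /\ (forall c1 c2, c1 \in C -> c2 \in C -> c1 != c2 -> (d <= rkdist c1 c2)%N).

From HB Require Import structures.
From mathcomp Require Import all_boot all_order all_algebra.
From mathcomp Require Import all_fingroup all_field.
From mathcomp Require Import zify.
Set Implicit Arguments. Unset Strict Implicit. Unset Printing Implicit Defensive.
Import GRing.Theory.
Local Open Scope ring_scope.

(* Put s = n - tau, k = 2 tau + 1 - d and let L be the degree-s extension of
   F = F_q.  A nonzero q-linearized polynomial f = sum_(l < k) c_l X^(q^l) over L
   has at most q^(k-1) roots, so for the F-linear maps (with F^tau in L)
     C_f : v |-> f(v)  and  E_f : v |-> (c_l v)_(l < k)  (into L^k = F^(ks) in F^(m-tau)),
   called Cmx and Emx below, rank C_f >= tau - (k - 1) and rank E_f = tau.  The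
   codewords [[1, C_f], [E_f^T, E_f^T C_f]] = [1; E_f^T] [1, C_f] have rank at most
   tau, so all q^(ks) of them lie in the ball of radius tau around 0, while the
   difference of two of them is [[0, C_g], [E_g^T, *]] with g nonzero, of rank at
   least rank C_g + rank E_g >= 2 tau + 1 - k = d.  By counting, some nonzero g
   makes the first k - 1 rows of C_g vanish, and then the codeword of g is at
   distance exactly d from the codeword of 0. *)

Lemma card_fieldExt (F : finFieldType) (L : fieldExtType F) :
  #|FinFieldExtType L| = (#|F| ^ \dim {:L})%N.
Proof.
rewrite -(@card_vspacef F (FinFieldExtType L) (Vector.class (L : vectType F))).
exact: (@card_vspace F (FinFieldExtType L) (Vector.class (L : vectType F))).
Qed.

Lemma natr_card_exp_eq0 (F : finFieldType) (L : fieldExtType F) s :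
  (0 < s)%N -> ((#|F| ^ s)%:R : L) = 0.
Proof.
have [p pr_p pcharFp] := finPcharP F; have pcharL : p \in [pchar L] by rewrite pchar_lalg.
have logF_gt0 : (0 < logn p #|F|)%N.
  rewrite -(ltn_exp2l _ _ (prime_gt1 pr_p)) expn0 -(card_pprimeChar pcharFp).
  exact: finNzRing_gt1.
move=> s_gt0; rewrite (card_pprimeChar pcharFp) -expnM natrX (pcharf0 pcharL).
by rewrite expr0n muln_eq0 (gtn_eqF logF_gt0) (gtn_eqF s_gt0).
Qed.

(* L is the splitting field of X^(q^s) - X over F, whose q^s roots fill L. *)
Lemma finField_ext_exists (F : finFieldType) (s : nat) : (0 < s)%N ->
  exists L : fieldExtType F, \dim {:L} = s.
Proof.
move=> s_gt0; pose m := (#|F| ^ s)%N.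
have F_gt1 : (1 < #|F|)%N := finNzRing_gt1 F.
have m_gt1 : (1 < m)%N by rewrite (ltn_exp2l 0).
have m_gt0 := ltnW m_gt1; have m1_gt0 : (0 < m.-1)%N by rewrite -ltnS prednK.
pose q (R : nzRingType) : {poly R} := 'X^m - 'X.
have Dq (R : nzRingType) : q R = ('X^(m.-1) - 1) * ('X - 0).
  by rewrite /q subr0 mulrBl mul1r -exprSr prednK.
have /FinSplittingFieldFor[/= L splitLq] : q F != 0.
  by rewrite Dq monic_neq0 ?rpredM ?monicXsubC ?monicXnsubC.
rewrite rmorphB rmorphXn /= map_polyX -/(q L) in splitLq.
exists L; pose Fm := FinFieldExtType L.
suffices cardL : #|Fm| = m.
  by apply/eqP; rewrite -(eqn_exp2l _ _ F_gt1) -card_fieldExt cardL.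
have /finField_galois_generator[/= a _ Da] : (1 <= {:L})%VS by apply: sub1v.
pose Em := fixedSpace (a ^+ s)%g; rewrite dimv1 expn1 in Da.
have{splitLq} [zs DqL defL] := splitLq.
have Uzs : uniq zs.
  rewrite -separable_prod_XsubC -(eqp_separable DqL) Dq separable_root andbC.
  rewrite /root !hornerE subr_eq0 eq_sym expr0n gtn_eqF ?oner_eq0 //=.
  rewrite cyclotomic.separable_Xn_sub_1 // -subn1 natrB // natr_card_exp_eq0 //.
  by rewrite subr_eq0 eq_sym oner_eq0.
suffices /eq_card-> : Fm =i zs.
  apply: succn_inj; rewrite (card_uniqP _) //= -(size_prod_XsubC _ id).
  by rewrite -(eqp_size DqL) size_polyDl size_polyXn // size_polyN size_polyX.
have in_zs : zs =i Em.
  move=> z; rewrite -root_prod_XsubC -(eqp_root DqL) (sameP fixedSpaceP eqP).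
  rewrite /root !hornerE subr_eq0 /= /m; congr (_ == z).
  elim: (s) => [|i IHi]; first by rewrite gal_id.
  by rewrite expgSr expnSr exprM IHi galM ?Da ?memvf.
suffices defEm : Em = {:L}%VS by move=> z; rewrite in_zs defEm memvf.
apply/eqP; rewrite eqEsubv subvf -defL -[Em]subfield_closed agenvS //.
by rewrite subv_add sub1v; apply/span_subvP=> z; rewrite in_zs.
Qed.

Lemma additive_kernel_nontrivial (U V : finZmodType) (f : U -> V) :
  {morph f : x y / x - y} -> (#|V| < #|U|)%N -> exists2 x, x != 0 & f x = 0.
Proof.
move=> fB; rewrite ltnNge => /negP card_lt.
have /injectivePn[x [y ne_xy fxy]] : ~~ injectiveb f.
  by apply/negP => /injectiveP/leq_card.
by exists (x - y); rewrite ?subr_eq0 // fB fxy subrr.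
Qed.

Section MatrixRank.
Variable R : fieldType.

Lemma mul_rV_lin1_fun m n (f : 'rV[R]_m -> 'rV[R]_n) :
  linear f -> forall u, u *m lin1_mx f = f u.
Proof.
move=> f_lin; exact: (mul_rV_lin1 (HB.pack f (GRing.isLinear.Build _ _ _ _ f f_lin))).
Qed.

Lemma rank_block0_ge m1 m2 n1 n2 (D : 'M[R]_(m1, n2)) (E : 'M[R]_(m2, n1))
    (G : 'M[R]_(m2, n2)) :
  (\rank D + \rank E <= \rank (block_mx 0 D E G))%N.
Proof.
set X := block_mx _ _ _ _; pose Q : 'M[R]_(n1 + n2, n1) := col_mx 1%:M 0.
have := mxrank_mul_ker X Q.
have -> : X *m Q = col_mx 0 E by rewrite mul_block_col !mulmx0 !mulmx1 !addr0.
rewrite rank_col_0mx => <-; rewrite addnC leq_add2l -(rank_row_0mx n1 D).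
apply: mxrankS; rewrite sub_capmx; apply/andP; split.
  have <- : row_mx (1%:M : 'M_m1) (0 : 'M_(m1, m2)) *m X = row_mx 0 D.
    by rewrite /X block_mxEv mul_row_col mul1mx mul0mx addr0.
  exact: submxMl.
by apply/sub_kermxP; rewrite mul_row_col mul0mx mulmx0 addr0.
Qed.

Lemma rank_block0_mul_le m1 m2 n2 (C : 'M[R]_(m1, n2)) (E : 'M[R]_(m2, m1)) :
  (\rank (block_mx 0 C E (E *m C)) <= \rank C + \rank E)%N.
Proof.
rewrite block_mxEv -addsmxE; apply: leq_trans (mxrank_adds_leqif _ _).1 _.
rewrite rank_row_0mx leq_add2l -[E in row_mx E _]mulmx1 -mul_mx_row.
exact: mxrankM_maxl.
Qed.

Lemma rank_block1_mul_le m1 n1 t (C : 'M[R]_(t, n1)) (E : 'M[R]_(m1, t)) :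
  (\rank (block_mx 1%:M C E (E *m C)) <= t)%N.
Proof.
have -> : block_mx 1%:M C E (E *m C) = col_mx 1%:M E *m row_mx 1%:M C.
  by rewrite mul_col_row !mulmx1 mul1mx.
exact: leq_trans (mxrankM_maxl _ _) (rank_leq_col _).
Qed.

Lemma pid_mul0_rank_le t n r (A : 'M[R]_(t, n)) :
  (r <= t)%N -> (pid_mx r : 'M_(r, t)) *m A = 0 -> (\rank A <= t - r)%N.
Proof.
move=> r_le_t pidA0.
have pid_sq : (pid_mx r : 'M[R]_t) = (pid_mx r : 'M_(t, r)) *m pid_mx r.
  by rewrite mul_pid_mx !minnn.
have -> : A = copid_mx r *m A.
  by rewrite /copid_mx pid_sq mulmxBl mul1mx -mulmxA pidA0 mulmx0 subr0.
by apply: leq_trans (mxrankM_maxl _ _) _; rewrite rank_copid_mx.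
Qed.

End MatrixRank.

Import VectorInternalTheory.

Section Gabidulin.
Variables (F : finFieldType) (L : fieldExtType F).
Local Notation q := #|F|.
Local Notation s := (dim L).

Lemma q_gt1 : (1 < q)%N. Proof. exact: finNzRing_gt1. Qed.

Lemma expr_card_powD l (x y : L) :
  (x + y) ^+ (q ^ l) = x ^+ (q ^ l) + y ^+ (q ^ l).
Proof.
have [p _ pcharFp] := finPcharP F; have pcharL : p \in [pchar L] by rewrite pchar_lalg.
rewrite (card_pprimeChar pcharFp) -expnM; elim: (_ * l)%N => [|e IHe].
  by rewrite !expr1.
by rewrite expnSr !exprM IHe -!(pFrobenius_autE pcharL) rmorphD.
Qed.

Lemma expr_card_powZ l (a : F) (x : L) : (a *: x) ^+ (q ^ l) = a *: x ^+ (q ^ l).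
Proof.
rewrite exprZn; congr (_ *: _).
by elim: l => [|l IHl]; rewrite ?expr1 // expnSr exprM IHl expf_card.
Qed.

Variables tau k : nat.
Implicit Types H : 'M[F]_(k, s).

Definition lcoef H (l : 'I_k) : L := r2v (row l H).

Definition linpoly H : {poly L} := \sum_(l < k) lcoef H l *: 'X^(q ^ l).

Definition embed (v : 'rV[F]_tau) : L := r2v (v *m pid_mx tau).

Definition Cmx H : 'M[F]_(tau, s) :=
  lin1_mx (fun v => v2r (linpoly H).[embed v]).

Definition Emx m' H : 'M[F]_(tau, m') :=
  lin1_mx (fun v => mxvec (\matrix_(l < k, j < s) v2r (lcoef H l * embed v) 0 j)
                    *m pid_mx (k * s)).

Definition codeword m' H : 'M[F]_(tau + m', tau + s) :=
  block_mx 1%:M (Cmx H) (Emx m' H)^T ((Emx m' H)^T *m Cmx H).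

Lemma lcoefB H1 H2 l : lcoef (H1 - H2) l = lcoef H1 l - lcoef H2 l.
Proof. by rewrite /lcoef !linearB. Qed.

Lemma linpolyB H1 H2 : linpoly (H1 - H2) = linpoly H1 - linpoly H2.
Proof.
by rewrite -sumrB; apply: eq_bigr => l _; rewrite lcoefB scalerBl.
Qed.

Lemma horner_linpoly H x : (linpoly H).[x] = \sum_l lcoef H l * x ^+ (q ^ l).
Proof.
by rewrite horner_sum; apply: eq_bigr => l _; rewrite hornerZ hornerXn.
Qed.

Lemma linpoly_linear H : linear (horner (linpoly H)).
Proof.
move=> a x y; rewrite !horner_linpoly scaler_sumr -big_split.
by apply: eq_bigr => l _; rewrite expr_card_powD expr_card_powZ mulrDr scalerAr.
Qed.

Lemma embed_linear : linear embed.
Proof. by move=> a u v; rewrite /embed mulmxDl -scalemxAl linearD linearZ. Qed.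

Lemma embed_inj : (tau <= s)%N -> injective embed.
Proof.
move=> tau_le_s u v /r2v_inj/(row_free_inj _) -> //.
by rewrite /row_free rank_pid_mx.
Qed.

Lemma mul_Cmx H u : u *m Cmx H = v2r (linpoly H).[embed u].
Proof.
apply: mul_rV_lin1_fun => a x y.
by rewrite embed_linear linpoly_linear linearD linearZ.
Qed.

Lemma mul_Emx m' H u :
  u *m Emx m' H
    = mxvec (\matrix_(l < k, j < s) v2r (lcoef H l * embed u) 0 j) *m pid_mx (k * s).
Proof.
apply: mul_rV_lin1_fun => a x y; rewrite scalemxAl -mulmxDl -linearZ -linearD.
congr (mxvec _ *m _); apply/matrixP => l j.
by rewrite !mxE embed_linear mulrDr -scalerAr linearD linearZ !mxE.
Qed.

Lemma CmxB H1 H2 : Cmx (H1 - H2) = Cmx H1 - Cmx H2.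
Proof. by apply/matrixP => i j; rewrite !mxE linpolyB hornerD hornerN linearB !mxE. Qed.

Lemma EmxB m' H1 H2 : Emx m' (H1 - H2) = Emx m' H1 - Emx m' H2.
Proof.
apply/row_matrixP => i; rewrite linearB /= !rowE !mul_Emx -mulmxBl -linearB.
congr (mxvec _ *m _); apply/matrixP => l j.
by rewrite !mxE lcoefB mulrBl linearB !mxE.
Qed.

Lemma Cmx0 : Cmx 0 = 0.
Proof. by rewrite -(subrr 0) CmxB subrr. Qed.

Lemma Emx0 m' : Emx m' 0 = 0.
Proof. by rewrite -(subrr 0) EmxB subrr. Qed.

Lemma lcoef_neq0 H : H != 0 -> exists l, lcoef H l != 0.
Proof.
move=> nzH; apply/existsP; apply: contraNT nzH => /existsPn lcoefH0.
apply/eqP/row_matrixP => l; rewrite row0; apply: r2v_inj; rewrite linear0.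
exact/eqP/negbNE/lcoefH0.
Qed.

Lemma coef_linpoly H (l : 'I_k) : (linpoly H)`_(q ^ l) = lcoef H l.
Proof.
rewrite coef_sum (bigD1 l) //= coefZ coefXn eqxx mulr1 big1 ?addr0 // => j ne_jl.
by rewrite coefZ coefXn eqn_exp2l ?q_gt1 // eq_sym val_eqE (negbTE ne_jl) mulr0.
Qed.

Lemma linpoly_neq0 H : H != 0 -> linpoly H != 0.
Proof.
move=> /lcoef_neq0[l]; apply: contraNneq => H0.
by rewrite -coef_linpoly H0 coef0.
Qed.

Lemma size_linpoly H : (size (linpoly H) <= (q ^ k.-1).+1)%N.
Proof.
apply: leq_trans (size_sum _ _ _) _; apply/bigmax_leqP => l _.
rewrite (leq_trans (size_scale_leq _ _)) // size_polyXn ltnS leq_exp2l ?q_gt1 //.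
by rewrite -ltnS prednK ?ltn_ord // (leq_ltn_trans _ (ltn_ord l)).
Qed.

Lemma rank_Cmx_ge H : (tau <= s)%N -> H != 0 -> (tau - k.-1 <= \rank (Cmx H))%N.
Proof.
move=> tau_le_s nzH; set K := kermx (Cmx H).
suffices rank_K : (\rank K <= k.-1)%N.
  by move: (mxrank_ker (Cmx H)) (rank_leq_row (Cmx H)); rewrite -/K; lia.
(* The kernel of Cmx H embeds injectively into the roots of linpoly H. *)
pose g (w : 'rV[F]_(\rank K)) := embed (w *m row_base K).
have g_inj : injective g.
  by move=> w1 w2 /(embed_inj tau_le_s)/(row_free_inj (row_base_free K)).
have g_root w : root (linpoly H) (g w).
  have /sub_kermxP : (w *m row_base K <= K)%MS.
    by rewrite (submx_trans (submxMl _ _)) ?eq_row_base.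
  by rewrite mul_Cmx /root => /(congr1 r2v); rewrite v2rK linear0 => ->.
have := max_poly_roots (linpoly_neq0 nzH) (rs := map g (enum 'rV[F]_(\rank K))).
rewrite map_inj_uniq ?enum_uniq // size_map -cardE card_mx mul1n.
have -> : all (root (linpoly H)) (map g (enum 'rV_(\rank K))).
  by apply/allP => _ /mapP[w _ ->].
move=> /(_ isT isT)/leq_trans/(_ (size_linpoly H)).
by rewrite ltnS leq_exp2l ?q_gt1.
Qed.

Lemma rank_Emx m' H : (tau <= s)%N -> (k * s <= m')%N -> H != 0 ->
  \rank (Emx m' H) = tau.
Proof.
move=> tau_le_s ks_le nzH; apply/eqP; rewrite -/(row_free _) -kermx_eq0.
apply/eqP/row_matrixP => i; rewrite row0; set w := row i _.
have : w *m Emx m' H = 0 by apply/sub_kermxP; exact: row_sub.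
have pid_free : row_free (pid_mx (k * s) : 'M[F]_(k * s, m')).
  by rewrite /row_free rank_pid_mx.
rewrite mul_Emx -(mul0mx _ (pid_mx (k * s) : 'M_(k * s, m'))).
move=> /(row_free_inj pid_free)/(congr1 vec_mx); rewrite mxvecK linear0.
move=> /matrixP prod0; have [l nz_l] := lcoef_neq0 nzH.
have : lcoef H l * embed w = 0.
  by apply: v2r_inj; rewrite linear0; apply/rowP => j; have := prod0 l j; rewrite !mxE.
move=> /eqP; rewrite mulf_eq0 (negbTE nz_l) /= => /eqP embed_w0.
by apply: (embed_inj tau_le_s); rewrite embed_w0 /embed mul0mx linear0.
Qed.

Lemma codeword_dist_ge m' H1 H2 : (tau <= s)%N -> (k * s <= m')%N -> H1 != H2 ->
  (tau - k.-1 + tau <= rkdist (codeword m' H1) (codeword m' H2))%N.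
Proof.
move=> tau_le_s ks_le ne_H; have nzH : H1 - H2 != 0 by rewrite subr_eq0.
have EmxB_tr : (Emx m' H1)^T - (Emx m' H2)^T = (Emx m' (H1 - H2))^T.
  by rewrite EmxB linearB.
rewrite /rkdist /codeword opp_block_mx add_block_mx subrr -CmxB EmxB_tr.
apply: leq_trans (rank_block0_ge _ _ _); rewrite mxrank_tr rank_Emx //.
by rewrite leq_add2r rank_Cmx_ge.
Qed.

Lemma codeword_dist_attained m' :
  (0 < k)%N -> (k <= tau)%N -> (tau <= s)%N -> (k * s <= m')%N ->
  exists2 H, H != 0 & rkdist (codeword m' H) (codeword m' 0) = (tau - k.-1 + tau)%N.
Proof.
move=> k_gt0 k_le_tau tau_le_s ks_le.
have [H nzH top_CmxH] : exists2 H, H != 0 & (pid_mx k.-1 : 'M_(k.-1, tau)) *m Cmx H = 0.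
  apply: additive_kernel_nontrivial => [H1 H2|]; first by rewrite CmxB mulmxBr.
  rewrite !card_mx ltn_exp2l ?q_gt1 // ltn_mul2r; lia.
exists H => //; apply/eqP; rewrite eqn_leq codeword_dist_ge ?andbT //.
rewrite /rkdist /codeword Cmx0 Emx0 trmx0 mulmx0 opp_block_mx add_block_mx.
rewrite !subr0 subrr; apply: leq_trans (rank_block0_mul_le _ _) _.
by rewrite mxrank_tr rank_Emx // leq_add2r pid_mul0_rank_le //; lia.
Qed.

Lemma exists_code_in_ball m' :
  (0 < k)%N -> (k <= tau)%N -> (tau <= s)%N -> (k * s <= m')%N ->
  exists C : {set 'M[F]_(tau + m', tau + s)},
    [/\ min_rank_dist C (tau - k.-1 + tau), C \subset rk_ball tau 0
      & #|C| = (q ^ (k * s))%N].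
Proof.
move=> k_gt0 k_le_tau tau_le_s ks_le.
have cw_inj : injective (codeword m').
  move=> H1 H2 eqH; apply/eqP/negPn/negP => /(codeword_dist_ge tau_le_s ks_le).
  by rewrite eqH /rkdist subrr mxrank0; lia.
exists (codeword m' @: [set: 'M_(k, s)]); split.
- split.
    have [H nzH dist_H] := codeword_dist_attained k_gt0 k_le_tau tau_le_s ks_le.
    by exists (codeword m' H), (codeword m' 0); rewrite !imset_f ?inE ?(inj_eq cw_inj).
  move=> _ _ /imsetP[H1 _ ->] /imsetP[H2 _ ->]; rewrite (inj_eq cw_inj).
  exact: codeword_dist_ge.
- by apply/subsetP => _ /imsetP[H _ ->]; rewrite inE /rkdist subr0 rank_block1_mul_le.
- by rewrite card_imset // cardsT card_mx.
Qed.

End Gabidulin.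

Local Close Scope ring_scope.

Theorem lemma4 (F : finFieldType) (d tau n m : nat) :
  ((d.-1)./2 < tau)%N -> (tau < d)%N -> (d < n)%N -> (n <= m)%N ->
  (tau <= n - tau)%N ->
  (d = 2 * tau \/ ((n - tau) * (2 * tau + 1 - d) + tau + 1 <= m)%N) ->
  exists (C : {set 'M[F]_(m, n)}) (r : 'M[F]_(m, n)),
    min_rank_dist C d /\
    (#|C :&: rk_ball tau r| <= \max_(y : 'M[F]_(m, n)) #|C :&: rk_ball tau y|)%N /\
    (#|F| ^ ((n - tau) * (2 * tau + 1 - d)) <= #|C :&: rk_ball tau r|)%N.
Proof.
move=> half_lt_tau tau_lt_d d_lt_n n_le_m tau_le_s m_large.
have d_le : d <= 2 * tau by move: half_lt_tau; rewrite ltn_half_double -muln2; lia.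
have [k [d_eq k_eq]] : exists k, d = 2 * tau + 1 - k /\ 2 * tau + 1 - d = k.
  by exists (2 * tau + 1 - d); lia.
rewrite k_eq in m_large *.
have [s n_eq] : exists s, n = tau + s by exists (n - tau); lia.
have [m' m_eq] : exists m', m = tau + m' by exists (m - tau); lia.
subst n m; rewrite addKn in tau_le_s m_large *.
have ks_le : k * s <= m'.
  case: m_large => [d_2tau|]; last by rewrite mulnC; lia.
  by rewrite (_ : k = 1) ?mul1n; lia.
have k_gt0 : 0 < k by lia.
have k_le_tau : k <= tau by lia.
have s_gt0 : 0 < s by lia.
have [L dimL] := finField_ext_exists F s_gt0; rewrite dimvf in dimL; subst s.
have [C [dist_C C_ball card_C]] := exists_code_in_ball k_gt0 k_le_tau tau_le_s ks_le.
exists C, 0%R; split; last split.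
- by rewrite (_ : d = tau - k.-1 + tau) //; lia.
- exact: leq_bigmax.
- by rewrite (setIidPl C_ball) card_C mulnC.
Qed.
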